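(* Let $2<p<\frac{10}{3}$, $\lambda_3<0$, and assume $\Lambda>0$. For every $a>0$, the function $r\mapsto g(a,r)$ on $(0,+\infty)$, where $$g(a,r):=\frac12-\frac{\Lambda}{2}C_4^4\,r\,a-\frac{2|\lambda_3|}{p}C_p^p\,a^{p(1-\gamma_p)}r^{p\gamma_p-2},$$ has a unique global maximum point. Moreover, $\max_{r>0}g(a,r)>0$ if $a<\bar a$, $=0$ if $a=\bar a$, and $<0$ if $a>\bar a$, where $\bar a:=\left(\frac{1}{2\alpha}\right)^{3/4}$ and $$\alpha:=\frac12(\Lambda C_4^4)^{\frac{p\gamma_p-2}{p\gamma_p-3}}\left(\frac{4|\lambda_3|(2-p\gamma_p)C_p^p}{p}\right)^{\frac{1}{3-p\gamma_p}}+2\left(\frac{C_p^p|\lambda_3|}{p}\right)^{\frac{1}{3-p\gamma_p}}\left(\frac{4(2-p\gamma_p)}{\Lambda C_4^4}\right)^{\frac{p\gamma_p-2}{3-p\gamma_p}}.$$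
   Context: $\Lambda:=\max\{|\lambda_1-\frac{4\pi}{3}\lambda_2|,|\lambda_1+\frac{8\pi}{3}\lambda_2|\}$ for given real parameters $\lambda_1,\lambda_2$. For $q\in(2,6)$, $\gamma_q:=\frac{3(q-2)}{2q}$ and $C_q>0$ is a constant in the Gagliardo–Nirenberg inequality $\|u\|_q\le C_q\|\nabla u\|_2^{\gamma_q}\|u\|_2^{1-\gamma_q}$ for all $u\in H^1(\mathbb{R}^3)$. *)

From Stdlib Require Import Reals.
Open Scope R_scope.

Definition gammaq (q : R) : R := 3 * (q - 2) / (2 * q).

Definition LambdaC (l1 l2 : R) : R :=
  Rmax (Rabs (l1 - 4 * PI / 3 * l2)) (Rabs (l1 + 8 * PI / 3 * l2)).

Definition gfun (Lam C4 Cp l3 p a r : R) : R :=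
  1 / 2 - Lam / 2 * C4 ^ 4 * r * a
  - 2 * Rabs l3 / p * Rpower Cp p * Rpower a (p * (1 - gammaq p))
      * Rpower r (p * gammaq p - 2).

Definition alphaC (Lam C4 Cp l3 p : R) : R :=
  let s := p * gammaq p in
  1 / 2 * Rpower (Lam * C4 ^ 4) ((s - 2) / (s - 3))
        * Rpower (4 * Rabs l3 * (2 - s) * Rpower Cp p / p) (1 / (3 - s))
  + 2 * Rpower (Rpower Cp p * Rabs l3 / p) (1 / (3 - s))
      * Rpower (4 * (2 - s) / (Lam * C4 ^ 4)) ((s - 2) / (3 - s)).

Definition abar (Lam C4 Cp l3 p : R) : R :=
  Rpower (1 / (2 * alphaC Lam C4 Cp l3 p)) (3 / 4).

(** With s := p γ_p ∈ (0, 2), g(a, r) = 1/2 - (A r + B r^(s-2)) where A ∝ a and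
    B ∝ a^(p-s).  A function A r + B r^e with A, B > 0 and e < 0 has a unique
    minimiser r0 on (0, ∞), characterised by A r0 = -e B r0^e; uniqueness and
    strictness follow from Bernoulli's inequality x^e > 1 + e (x - 1) for x ≠ 1.
    Since p - s = 2 - s/3, the minimum scales as a^(4/3) and equals α a^(4/3),
    so the maximum of g is 1/2 - α a^(4/3), whose sign changes exactly at
    a = (1/(2α))^(3/4). *)

From Stdlib Require Import Reals Lra.
Open Scope R_scope.

Lemma Rpower_pos (x y : R) : 0 < Rpower x y.
Proof. exact (exp_pos _). Qed.

Ltac Rpos :=
  repeat first [ assumption | lra | apply Rpower_pos | apply pow_lt
               | apply Rmult_lt_0_compat | apply Rdiv_lt_0_compat
               | apply Rinv_0_lt_compat | apply Rabs_pos_lt ].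

Ltac ln_expand :=
  unfold Rdiv;
  repeat first [ rewrite ln_Rpower | rewrite ln_1
               | rewrite ln_mult by Rpos | rewrite ln_Rinv by Rpos ].

Lemma ln_le_sub_1 (x : R) : 0 < x -> ln x <= x - 1.
Proof.
  intros Hx; pose proof (exp_ineq1_le (ln x)) as H.
  rewrite exp_ln in H by exact Hx; lra.
Qed.

Lemma Rpower_gt_tangent (x e : R) :
  0 < x -> e < 0 -> x <> 1 -> 1 + e * (x - 1) < Rpower x e.
Proof.
  intros Hx He Hx1.
  assert (Hln0 : ln x <> 0).
  { intros H0; apply Hx1; rewrite <- (exp_ln x), H0 by exact Hx; apply exp_0. }
  assert (Hexp : 1 + e * ln x < Rpower x e).
  { apply exp_ineq1; intros H; apply Rmult_integral in H; lra. }
  pose proof (ln_le_sub_1 x Hx); nra.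
Qed.

Section LinearPlusPower.

Variables A B e : R.
Hypotheses (HA : 0 < A) (HB : 0 < B) (He : e < 0).

Definition lin_pow (r : R) : R := A * r + B * Rpower r e.

Definition lin_pow_argmin : R := Rpower (- e * B / A) (1 / (1 - e)).

Lemma lin_pow_argmin_stationary :
  A * lin_pow_argmin = - e * B * Rpower lin_pow_argmin e.
Proof.
  assert (HQ : 0 < - e * B / A) by Rpos.
  unfold lin_pow_argmin; rewrite Rpower_mult.
  replace (1 / (1 - e)) with (1 + 1 / (1 - e) * e) at 1 by (field; lra).
  rewrite Rpower_plus, Rpower_1 by exact HQ.
  field; lra.
Qed.

(* With r = r0 x, the difference is A r0 (x - 1) + B r0^e (x^e - 1), and the
   tangent bound makes it exceed (x - 1) (A r0 + e B r0^e) = 0. *)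
Lemma lin_pow_argmin_strict (r : R) :
  0 < r -> r <> lin_pow_argmin -> lin_pow lin_pow_argmin < lin_pow r.
Proof.
  intros Hr Hne.
  set (r0 := lin_pow_argmin) in *.
  assert (Hr0 : 0 < r0) by apply Rpower_pos.
  set (x := r / r0).
  assert (Hx : 0 < x) by Rpos.
  assert (Hrx : r = r0 * x) by (unfold x; field; lra).
  assert (Hx1 : x <> 1) by (intros H; apply Hne; rewrite Hrx, H; ring).
  pose proof (Rpower_gt_tangent x e Hx He Hx1) as Htan.
  pose proof lin_pow_argmin_stationary as Hstat; fold r0 in Hstat.
  assert (HBP : 0 < B * Rpower r0 e) by Rpos.
  unfold lin_pow; rewrite Hrx, <- Rpower_mult_distr by lra.
  nra.
Qed.

Lemma lin_pow_argmin_min (r : R) : 0 < r -> lin_pow lin_pow_argmin <= lin_pow r.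
Proof.
  intros Hr; destruct (Req_dec r lin_pow_argmin) as [-> | Hne]; [lra |].
  now apply Rlt_le, lin_pow_argmin_strict.
Qed.

End LinearPlusPower.

Lemma gammaq_mul (p : R) : 0 < p -> p * gammaq p = 3 * (p - 2) / 2.
Proof. intros Hp; unfold gammaq; field; lra. Qed.

Section GfunMaximum.

Variables L C4 Cp l3 p : R.
Hypotheses (HL : 0 < L) (HC4 : 0 < C4) (HCp : 0 < Cp)
           (Hp2 : 2 < p) (Hp3 : p < 10 / 3) (Hl3 : l3 < 0).

Local Notation s := (p * gammaq p).
Local Notation g := (gfun L C4 Cp l3 p).
Local Notation coefA a := (L * C4 ^ 4 * a / 2).
Local Notation coefB a := (2 * (Rpower Cp p * Rabs l3 / p) * Rpower a (p - s)).

Lemma gfun_exponent_neg : s - 2 < 0.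
Proof. rewrite gammaq_mul; lra. Qed.

Definition gfun_argmax (a : R) : R := lin_pow_argmin (coefA a) (coefB a) (s - 2).

Lemma gfun_lin_pow (a r : R) : g a r = 1 / 2 - lin_pow (coefA a) (coefB a) (s - 2) r.
Proof.
  unfold gfun, lin_pow; replace (p * (1 - gammaq p)) with (p - s) by ring.
  field; lra.
Qed.

Lemma gfun_argmax_max (a r : R) : 0 < a -> 0 < r -> g a r <= g a (gfun_argmax a).
Proof.
  intros Ha Hr; rewrite !gfun_lin_pow.
  assert (lin_pow (coefA a) (coefB a) (s - 2) (gfun_argmax a)
          <= lin_pow (coefA a) (coefB a) (s - 2) r).
  { apply lin_pow_argmin_min; [Rpos | Rpos | exact gfun_exponent_neg | exact Hr]. }
  lra.
Qed.

Lemma gfun_argmax_unique (a r1 : R) :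
  0 < a -> 0 < r1 -> (forall r, 0 < r -> g a r <= g a r1) -> r1 = gfun_argmax a.
Proof.
  intros Ha Hr1 Hmax.
  destruct (Req_dec r1 (gfun_argmax a)) as [| Hne]; [assumption | exfalso].
  assert (Hlt : lin_pow (coefA a) (coefB a) (s - 2) (gfun_argmax a)
                < lin_pow (coefA a) (coefB a) (s - 2) r1).
  { apply lin_pow_argmin_strict;
      [Rpos | Rpos | exact gfun_exponent_neg | exact Hr1 | exact Hne]. }
  specialize (Hmax (gfun_argmax a) ltac:(apply Rpower_pos)).
  rewrite !gfun_lin_pow in Hmax; lra.
Qed.

(* Each of the two terms of the minimum is a product of powers of positive
   quantities; we compare logarithms, which are linear in the logarithms of
   L, C4^4, Cp, |l3|, p, 2 - s, 2 and a (4 is rewritten as 2 * 2 so that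
   ln 4 does not appear as an extra atom). *)
Lemma gfun_max_value (a : R) :
  0 < a -> g a (gfun_argmax a) = 1 / 2 - alphaC L C4 Cp l3 p * Rpower a (4 / 3).
Proof.
  intros Ha; rewrite gfun_lin_pow; f_equal.
  unfold gfun_argmax, lin_pow, lin_pow_argmin, alphaC; cbv zeta.
  rewrite gammaq_mul by lra.
  replace (- (3 * (p - 2) / 2 - 2)) with (2 - 3 * (p - 2) / 2) by ring.
  replace 4 with (2 * 2) by ring.
  rewrite Rmult_plus_distr_r; f_equal; apply ln_inv; try Rpos; ln_expand;
    field; lra.
Qed.

Lemma alphaC_pos : 0 < alphaC L C4 Cp l3 p.
Proof.
  unfold alphaC; cbv zeta; rewrite gammaq_mul by lra.
  apply Rplus_lt_0_compat; Rpos.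
Qed.

Lemma alphaC_abar : alphaC L C4 Cp l3 p * Rpower (abar L C4 Cp l3 p) (4 / 3) = 1 / 2.
Proof.
  pose proof alphaC_pos.
  unfold abar; rewrite Rpower_mult.
  replace (3 / 4 * (4 / 3)) with 1 by field.
  rewrite Rpower_1 by Rpos; field; lra.
Qed.

End GfunMaximum.

Lemma half_sub_Rpower_sign (alpha k a b : R) :
  0 < alpha -> 0 < k -> 0 < a -> 0 < b -> alpha * Rpower b k = 1 / 2 ->
  (a < b -> 0 < 1 / 2 - alpha * Rpower a k) /\
  (a = b -> 1 / 2 - alpha * Rpower a k = 0) /\
  (b < a -> 1 / 2 - alpha * Rpower a k < 0).
Proof.
  intros Halpha Hk Ha Hb Hthr; rewrite <- Hthr.
  split; [| split].
  - intros Hab; pose proof (Rlt_Rpower_l a b k Hk (conj Ha Hab)); nra.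
  - intros ->; ring.
  - intros Hba; pose proof (Rlt_Rpower_l b a k Hk (conj Hb Hba)); nra.
Qed.

Theorem lemma2p4 (l1 l2 l3 p C4 Cp : R) :
  0 < C4 -> 0 < Cp ->
  2 < p -> p < 10 / 3 -> l3 < 0 -> 0 < LambdaC l1 l2 ->
  forall a : R, 0 < a ->
    exists r0 : R,
      0 < r0 /\
      (forall r, 0 < r -> gfun (LambdaC l1 l2) C4 Cp l3 p a r
                          <= gfun (LambdaC l1 l2) C4 Cp l3 p a r0) /\
      (forall r1, 0 < r1 ->
         (forall r, 0 < r -> gfun (LambdaC l1 l2) C4 Cp l3 p a r
                             <= gfun (LambdaC l1 l2) C4 Cp l3 p a r1) ->
         r1 = r0) /\
      (a < abar (LambdaC l1 l2) C4 Cp l3 p -> 0 < gfun (LambdaC l1 l2) C4 Cp l3 p a r0) /\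
      (a = abar (LambdaC l1 l2) C4 Cp l3 p -> gfun (LambdaC l1 l2) C4 Cp l3 p a r0 = 0) /\
      (abar (LambdaC l1 l2) C4 Cp l3 p < a -> gfun (LambdaC l1 l2) C4 Cp l3 p a r0 < 0).
Proof.
  intros HC4 HCp Hp2 Hp3 Hl3 HL a Ha.
  set (L := LambdaC l1 l2) in *.
  exists (gfun_argmax L C4 Cp l3 p a).
  split; [apply Rpower_pos |].
  split; [intros r; now apply gfun_argmax_max |].
  split; [intros r1; now apply gfun_argmax_unique |].
  rewrite gfun_max_value by assumption.
  apply half_sub_Rpower_sign; try lra.
  - now apply alphaC_pos.
  - apply Rpower_pos.
  - now apply alphaC_abar.
Qed.
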